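(* Let $m,n,k$ be positive integers, $A\in\mathbb{R}^{m\times n}$, $x^*\in\mathbb{R}^n$ with support $S^*=\{i:x^*_i\neq0\}$ satisfying $1\le|S^*|\le k$, and $y=Ax^*$ (noiseless case, $e=0$). Assume $A$ satisfies the $(2k+1)$-RIP, that $\|A_i\|_2=1$ for every column $A_i$ of $A$, and that there exists $\beta\in(0,1)$ with $$\frac{2k\,\alpha_k^{RIP}\|x^*\|_2}{\min_{i\in S^*}|x^*_i|}\le\beta .$$ Then $x^*$ satisfies $\gamma_k^{RIP}\|e\|_2<\frac{\min_{i\in S^*}|x^*_i|}{2k}-\alpha_k^{RIP}\|x^*\|_2$ (with $e=0$). As a consequence, for the initialization $\mathcal{X}^0=0$ and every $\eta>0$, if SEA is run for $N>\frac{k+1}{1-\beta}$ iterations, then $S^*\subseteq S^{t_{BEST}}$ and $x^{t_{BEST}}=x^*$.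
   Context: For $l\in\{1,\dots,n\}$, the restricted isometry constant $\delta_l$ of $A$ is the smallest $\delta\ge0$ such that $(1-\delta)\|x\|_2^2\le\|Ax\|_2^2\le(1+\delta)\|x\|_2^2$ for all $x\in\mathbb{R}^n$ with at most $l$ nonzero entries; $A$ satisfies the $l$-RIP if $\delta_l<1$. Define $\alpha_k^{RIP}=\delta_{2k+1}\left(1+\frac{\delta_{2k}}{1-\delta_k}\right)$ and $\gamma_k^{RIP}=1+\frac{\delta_{2k+1}\sqrt{1+\delta_k}}{1-\delta_k}$. For $v\in\mathbb{R}^n$, $\mathrm{largest}_k(v)$ is the set of indices of the $k$ entries of $v$ with largest absolute value (ties broken by selecting the highest indices). For $S\subseteq\{1,\dots,n\}$, $A_S$ is the submatrix of columns indexed by $S$, $v_S$ the restriction of a vector to $S$, and $A_S^\dagger$ the Moore–Penrose pseudoinverse of $A_S$. The Support Exploration Algorithm (SEA) with initialization $\mathcal{X}^0$ and step size $\eta>0$ generates, for $t=0,1,2,\dots$: $S^t=\mathrm{largest}_k(\mathcal{X}^t)$; $x^t_i=0$ for $i\notin S^t$ and $x^t_{S^t}=A_{S^t}^\dagger y$; $\mathcal{X}^{t+1}=\mathcal{X}^t-\eta A^T(Ax^t-y)$. When run for $N$ iterations (computing $x^0,\dots,x^{N-1}$), SEA outputs $x^{t_{BEST}}$ with $t_{BEST}\in\arg\min_{t'\in\{0,\dots,N-1\}}\|Ax^{t'}-y\|_2$. *)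

From HB Require Import structures.
From mathcomp Require Import all_boot all_order all_algebra.
From mathcomp Require Import boolp classical_sets reals.
Set Implicit Arguments. Unset Strict Implicit. Unset Printing Implicit Defensive.
Import Order.TTheory GRing.Theory Num.Theory.
Local Open Scope ring_scope.

Section SEA.
Variable R : realType.

Definition norm2 {p : nat} (v : 'cV[R]_p) : R := Num.sqrt (\sum_i (v i 0) ^+ 2).

Definition supp {p : nat} (v : 'cV[R]_p) : {set 'I_p} := [set i | v i 0 != 0].

(* min_{i in supp x} |x_i| ; the seed norm2 x bounds every |x_i|, so for a
   nonzero x this is exactly the minimum over the support *)
Definition min_supp {p : nat} (v : 'cV[R]_p) : R :=
  \big[Num.min/norm2 v]_(i | v i 0 != 0) `|v i 0|.

Definition rip_ineq {m n : nat} (A : 'M[R]_(m, n)) (l : nat) (d : R) :=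
  forall x : 'cV[R]_n, (#|supp x| <= l)%N ->
    (1 - d) * norm2 x ^+ 2 <= norm2 (A *m x) ^+ 2 <= (1 + d) * norm2 x ^+ 2.

Definition is_ric {m n : nat} (A : 'M[R]_(m, n)) (l : nat) (d : R) :=
  [/\ 0 <= d, rip_ineq A l d & forall d', 0 <= d' -> rip_ineq A l d' -> d <= d'].

Definition alpha_rip (dk d2k d2k1 : R) : R := d2k1 * (1 + d2k / (1 - dk)).
Definition gamma_rip (dk d2k1 : R) : R := 1 + d2k1 * Num.sqrt (1 + dk) / (1 - dk).

(* largest_k(v): indices of the k entries of largest absolute value,
   ties broken in favour of the highest indices: i is selected iff fewer
   than k indices j beat i, where j beats i iff |v_j| > |v_i|, or
   |v_j| = |v_i| and j > i. *)
Definition largest {n : nat} (k : nat) (v : 'cV[R]_n) : {set 'I_n} :=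
  let beats (j i : 'I_n) : bool :=
    (`|v i 0| < `|v j 0|) || ((`|v j 0| == `|v i 0|) && (i < j)%N) in
  [set i | (#|[set j | beats j i]| < k)%N].

Definition penrose {p q : nat} (B : 'M[R]_(p, q)) (P : 'M[R]_(q, p)) : Prop :=
  [/\ B *m P *m B = B, P *m B *m P = P, (B *m P)^T = B *m P & (P *m B)^T = P *m B].

Definition pinv {p q : nat} (B : 'M[R]_(p, q)) : 'M[R]_(q, p) :=
  xget 0 [set P | penrose B P].

Definition colS {m n : nat} (A : 'M[R]_(m, n)) (S : {set 'I_n}) : 'M[R]_(m, #|S|) :=
  colsub (fun j : 'I_#|S| => enum_val j) A.

Definition sea_x {m n : nat} (A : 'M[R]_(m, n)) (y : 'cV[R]_m) (S : {set 'I_n})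
  : 'cV[R]_n :=
  let v := pinv (colS A S) *m y in
  \col_i \sum_(j < #|S| | enum_val j == i) v j 0.

Definition sea_S {n : nat} (k : nat) (X : 'cV[R]_n) : {set 'I_n} := largest k X.

Fixpoint sea_X {m n : nat} (A : 'M[R]_(m, n)) (y : 'cV[R]_m) (k : nat) (eta : R)
  (X0 : 'cV[R]_n) (t : nat) : 'cV[R]_n :=
  match t with
  | 0 => X0
  | t'.+1 => let X := sea_X A y k eta X0 t' in
             X - eta *: (A^T *m (A *m sea_x A y (sea_S k X) - y))
  end.

Definition sea_St {m n : nat} A y k eta X0 t : {set 'I_n} :=
  sea_S k (@sea_X m n A y k eta X0 t).
Definition sea_xt {m n : nat} A y k eta X0 t : 'cV[R]_n :=
  @sea_x m n A y (sea_St A y k eta X0 t).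

End SEA.

From HB Require Import structures.
From mathcomp Require Import all_boot all_order all_algebra.
From mathcomp Require Import boolp classical_sets reals.
From mathcomp Require Import ring lra.
Import Order.TTheory GRing.Theory Num.Theory.
Local Open Scope ring_scope.

(* Let a := alpha_k^RIP ||x*|| and c := min_{i in S*} |x*_i| - a.  For any
   support estimate T with |T| <= k, write x_T - x* = w - u with w supported
   on T and u the part of x* outside T; the normal equations and the RIP give
   ||w|| <= delta_2k / (1 - delta_k) ||x*||, hence the gradient
   g = A^T (A x_T - y) vanishes on T and satisfies |g_j + x*_j| <= a off T.
   Along SEA, a coordinate outside S* therefore moves by at most eta a per
   step, while each step at which i in S* is left out of the estimate pushes
   sg(x*_i) X_i up by at least eta c.  An index i in S* that is left out is
   dominated by some coordinate outside S*, so up to time t it has been left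
   out at most a t / c + 1 times.  If S* were never covered during N steps,
   summing over the at most k indices of S* would give N c <= k (a N + c),
   which the bound on beta and N excludes.  Once S* is covered, x^t = x* and
   the residual vanishes, so the best iterate has zero residual and equals x*
   by (2k+1)-RIP uniqueness of k-sparse solutions. *)

Section SEA.
Variable R : realType.

Definition dot {p} (u v : 'cV[R]_p) : R := \sum_i u i 0 * v i 0.

Lemma dotC {p} (u v : 'cV[R]_p) : dot u v = dot v u.
Proof. by apply: eq_bigr => i _; rewrite mulrC. Qed.

Lemma dotBr {p} (u v w : 'cV[R]_p) : dot u (v - w) = dot u v - dot u w.
Proof. by rewrite /dot -sumrB; apply: eq_bigr => i _; rewrite !mxE mulrBr. Qed.

Lemma dotDr {p} (u v w : 'cV[R]_p) : dot u (v + w) = dot u v + dot u w.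
Proof. by rewrite /dot -big_split; apply: eq_bigr => i _; rewrite !mxE mulrDr. Qed.

Lemma dotZr {p} a (u v : 'cV[R]_p) : dot u (a *: v) = a * dot u v.
Proof. by rewrite /dot mulr_sumr; apply: eq_bigr => i _; rewrite !mxE mulrCA. Qed.

Lemma dotZl {p} a (u v : 'cV[R]_p) : dot (a *: u) v = a * dot u v.
Proof. by rewrite dotC dotZr dotC. Qed.

Lemma dot0r {p} (u : 'cV[R]_p) : dot u 0 = 0.
Proof. by apply: big1 => i _; rewrite mxE mulr0. Qed.

Lemma dot_trmx {p} (u v : 'cV[R]_p) : dot u v = (u^T *m v) 0 0.
Proof. by rewrite mxE; apply: eq_bigr => i _; rewrite mxE. Qed.

Lemma norm2_sq {p} (u : 'cV[R]_p) : norm2 u ^+ 2 = dot u u.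
Proof.
rewrite sqr_sqrtr; last by apply: sumr_ge0 => i _; rewrite sqr_ge0.
by apply: eq_bigr => i _; rewrite expr2.
Qed.

Lemma norm2_ge0 {p} (u : 'cV[R]_p) : 0 <= norm2 u.
Proof. exact: sqrtr_ge0. Qed.

Lemma norm2_eq0 {p} (u : 'cV[R]_p) : (norm2 u == 0) = (u == 0).
Proof.
have sq_ge0 i (_ : true) : 0 <= u i 0 ^+ 2 by exact: sqr_ge0.
apply/idP/eqP => [|->]; last first.
  by rewrite /norm2 big1 ?sqrtr0 // => i _; rewrite mxE expr0n.
rewrite sqrtr_eq0 => /(conj (sumr_ge0 _ sq_ge0))/andP/le_anti/esym/psumr_eq0P u0.
apply/matrixP => i j; rewrite (ord1 j) mxE.
by apply/eqP; rewrite -sqrf_eq0 u0.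
Qed.

Lemma norm2_gt0 {p} (u : 'cV[R]_p) : (0 < norm2 u) = (u != 0).
Proof. by rewrite lt_def norm2_eq0 norm2_ge0 andbT. Qed.

Lemma norm2_0 {p} : norm2 (0 : 'cV[R]_p) = 0.
Proof. by apply/eqP; rewrite norm2_eq0. Qed.

Lemma norm2Z {p} a (u : 'cV[R]_p) : norm2 (a *: u) = `|a| * norm2 u.
Proof.
rewrite /norm2 -sqrtr_sqr -sqrtrM ?sqr_ge0 // mulr_sumr.
by congr Num.sqrt; apply: eq_bigr => i _; rewrite mxE exprMn.
Qed.

Lemma norm2_delta {p} (j : 'I_p) : norm2 (delta_mx j 0 : 'cV[R]_p) = 1.
Proof.
rewrite /norm2 (bigD1 j) //= big1 ?addr0 => [|i /negPf ij]; last by rewrite mxE ij expr0n.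
by rewrite mxE !eqxx expr1n sqrtr1.
Qed.

Lemma norm2DB_sq {p} (u v : 'cV[R]_p) :
  norm2 (u + v) ^+ 2 = norm2 u ^+ 2 + 2 * dot u v + norm2 v ^+ 2 /\
  norm2 (u - v) ^+ 2 = norm2 u ^+ 2 - 2 * dot u v + norm2 v ^+ 2.
Proof.
rewrite !norm2_sq /dot mulr_sumr -!(sumrB, big_split).
by split; apply: eq_bigr => i _; rewrite !mxE /=; ring.
Qed.

Definition restr {p} (T : {set 'I_p}) (v : 'cV[R]_p) : 'cV[R]_p :=
  \col_i (if i \in T then v i 0 else 0).

Lemma norm2_restr {p} (T : {set 'I_p}) (v : 'cV[R]_p) : norm2 (restr T v) <= norm2 v.
Proof.
rewrite ler_sqrt; last by apply: sumr_ge0 => i _; rewrite sqr_ge0.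
by apply: ler_sum => i _; rewrite mxE; case: ifP; rewrite ?expr0n ?sqr_ge0.
Qed.

Lemma restrC {p} (T : {set 'I_p}) (v : 'cV[R]_p) : restr T v + restr (~: T) v = v.
Proof.
by apply/matrixP => i j; rewrite (ord1 j) !mxE inE; case: (i \in T); rewrite ?addr0 ?add0r.
Qed.

Lemma restrD1 {p} (T : {set 'I_p}) (v : 'cV[R]_p) j : j \in T ->
  restr T v = v j 0 *: delta_mx j 0 + restr (T :\ j) v.
Proof.
move=> jT; apply/matrixP => i c; rewrite (ord1 c) !mxE !inE andbT.
by case: eqVneq => [->|_]; rewrite ?jT ?mulr1 ?mulr0 ?addr0 ?add0r.
Qed.

Lemma supp_subsetP {p} (v : 'cV[R]_p) (U : {set 'I_p}) :
  reflect (forall i, i \notin U -> v i 0 = 0) (supp v \subset U).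
Proof.
apply: (iffP fintype.subsetP) => [vU i|vU i]; last by rewrite inE; apply: contraR => /vU ->.
by apply: contraNeq => /negbTE vi; apply: vU; rewrite inE vi.
Qed.

Lemma suppZ {p} a (v : 'cV[R]_p) : supp (a *: v) \subset supp v.
Proof. by apply/supp_subsetP => i; rewrite inE negbK mxE => /eqP ->; rewrite mulr0. Qed.

Lemma suppN {p} (v : 'cV[R]_p) : supp (- v) = supp v.
Proof. by apply/setP => i; rewrite !inE mxE oppr_eq0. Qed.

Lemma suppD {p} (u v : 'cV[R]_p) : supp (u + v) \subset supp u :|: supp v.
Proof.
apply/supp_subsetP => i; rewrite !inE negb_or !negbK mxE.
by case/andP => /eqP -> /eqP ->; rewrite addr0.
Qed.

Lemma supp_delta {p} (j : 'I_p) : supp (delta_mx j 0 : 'cV[R]_p) = [set j].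
Proof. by apply/setP => i; rewrite !inE mxE eqxx andbT pnatr_eq0 eqb0 negbK. Qed.

Lemma supp_restr {p} (T : {set 'I_p}) (v : 'cV[R]_p) : supp (restr T v) = T :&: supp v.
Proof. by apply/setP => i; rewrite !inE mxE; case: (i \in T); rewrite ?eqxx. Qed.

Lemma restr_disjoint {p} (T : {set 'I_p}) (v : 'cV[R]_p) :
  [disjoint T & supp v] -> restr T v = 0.
Proof.
move=> Tv; apply/matrixP => i j; rewrite (ord1 j) !mxE; case: ifP => // iT.
by move: (disjointFr Tv iT); rewrite inE => /negbFE/eqP.
Qed.

Lemma dot_disjoint {p} (u v : 'cV[R]_p) : [disjoint supp u & supp v] -> dot u v = 0.
Proof.
move=> uv; apply: big1 => i _; case: (boolP (i \in supp u)) => iu.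
  by move: (disjointFr uv iu); rewrite inE => /negbFE/eqP ->; rewrite mulr0.
by move: iu; rewrite inE negbK => /eqP ->; rewrite mul0r.
Qed.

Lemma min_supp_le {p} (v : 'cV[R]_p) i : v i 0 != 0 -> min_supp v <= `|v i 0|.
Proof. exact: (@bigmin_le_cond _ _ _ _ _ (fun i => v i 0 != 0)). Qed.

Lemma min_supp_gt0 {p} (v : 'cV[R]_p) : v != 0 -> 0 < min_supp v.
Proof.
by rewrite -norm2_gt0 => v0; apply: lt_bigmin => // i vi; rewrite normr_gt0.
Qed.

Section RestrictedIsometry.
Context {m n l : nat} {A : 'M[R]_(m, n)} {d : R}.
Hypothesis rip : rip_ineq A l d.

Lemma rip_dot_le (u v : 'cV[R]_n) :
  [disjoint supp u & supp v] -> (#|supp u| + #|supp v| <= l)%N ->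
  2 * dot (A *m u) (A *m v) <= d * (norm2 u ^+ 2 + norm2 v ^+ 2).
Proof.
move=> uv card_uv.
have small (w : 'cV[R]_n) : supp w \subset supp u :|: supp v -> (#|supp w| <= l)%N.
  move=> /subset_leq_card /leq_trans; apply; apply: leq_trans card_uv.
  exact: (leq_card_setU _ _).1.
have /andP[_ up] := rip _ (small _ (suppD u v)).
have small_uBv : (#|supp (u - v)| <= l)%N.
  by apply: small; rewrite -(suppN v); apply: suppD.
have /andP[lo _] := rip _ small_uBv.
have [nD nB] := norm2DB_sq u v; have [AnD AnB] := norm2DB_sq (A *m u) (A *m v).
rewrite mulmxDr nD AnD (dot_disjoint _ _ uv) in up.
rewrite mulmxBr nB AnB (dot_disjoint _ _ uv) in lo.
nra.
Qed.

Lemma rip_dot (u v : 'cV[R]_n) :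
  [disjoint supp u & supp v] -> (#|supp u| + #|supp v| <= l)%N ->
  `|dot (A *m u) (A *m v)| <= d * norm2 u * norm2 v.
Proof.
move=> uv card_uv.
have [->|u0] := eqVneq u 0; first by rewrite mulmx0 dotC dot0r normr0 norm2_0 mulr0 mul0r.
have [->|v0] := eqVneq v 0; first by rewrite mulmx0 dot0r normr0 norm2_0 mulr0.
have uv_gt0 : 0 < norm2 u * norm2 v by rewrite mulr_gt0 ?norm2_gt0.
have signed s : `|s| = 1 -> s * dot (A *m u) (A *m v) <= d * norm2 u * norm2 v.
  move=> s1; set p := norm2 v *: u; set q := (s * norm2 u) *: v.
  have pq : [disjoint supp p & supp q].
    exact: disjointWl (suppZ _ _) (disjointWr (suppZ _ _) uv).
  have card_pq : (#|supp p| + #|supp q| <= l)%N.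
    apply: leq_trans card_uv.
    by apply: leq_add; apply: subset_leq_card; apply: suppZ.
  have := rip_dot_le _ _ pq card_pq.
  rewrite -!scalemxAr dotZl dotZr !norm2Z normrM s1 !ger0_norm ?norm2_ge0 //.
  nra.
have := signed 1 (normr1 _); have := signed (-1) (normrN1 _).
by rewrite ler_norml !mul1r mulN1r; lra.
Qed.

Lemma rip_inj (z : 'cV[R]_n) :
  d < 1 -> (#|supp z| <= l)%N -> A *m z = 0 -> z = 0.
Proof.
move=> d1 zl Az; have /andP[lo _] := rip _ zl.
rewrite Az norm2_0 expr0n /= in lo.
apply/eqP; rewrite -norm2_eq0 -sqrf_eq0 eq_le sqr_ge0 andbT.
by rewrite -(pmulr_rle0 _ (_ : 0 < 1 - d)) // subr_gt0.
Qed.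

Lemma rip_sparse_unique (u v : 'cV[R]_n) :
  d < 1 -> (#|supp u| + #|supp v| <= l)%N -> A *m u = A *m v -> u = v.
Proof.
move=> d1 card_uv Auv; apply/eqP; rewrite -subr_eq0; apply/eqP/(rip_inj _ d1).
  apply: leq_trans (subset_leq_card _) (leq_trans (leq_card_setU _ _).1 card_uv).
  by rewrite -(suppN v); apply: suppD.
by rewrite mulmxBr Auv subrr.
Qed.

End RestrictedIsometry.

Lemma ric_le {m n} {A : 'M[R]_(m, n)} {l l' d d'} :
  (l <= l')%N -> is_ric A l d -> is_ric A l' d' -> d <= d'.
Proof.
move=> ll' [_ _ least] [d'_ge0 rip' _]; apply: least => // z zl.
exact/rip'/(leq_trans zl).
Qed.

Lemma pinv_penrose {p q} (B : 'M[R]_(p, q)) :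
  (forall v : 'cV[R]_q, B *m v = 0 -> v = 0) -> penrose B (pinv B).
Proof.
move=> B_inj; set G := B^T *m B.
have G_sym : G^T = G by rewrite /G trmx_mul trmxK.
have G_unit : G \in unitmx.
  rewrite -row_free_unit; apply: inj_row_free => v vG.
  have Gv : G *m v^T = 0 by rewrite -G_sym -trmx_mul vG trmx0.
  have : B *m v^T = 0.
    apply/eqP; rewrite -norm2_eq0 -sqrf_eq0 norm2_sq dot_trmx trmx_mul -mulmxA.
    by rewrite (mulmxA B^T) Gv mulmx0 mxE.
  by move/B_inj/(congr1 trmx); rewrite trmxK trmx0.
apply: (@xgetPex _ 0 [set P | penrose B P]).
have PB : invmx G *m B^T *m B = 1%:M by rewrite -mulmxA mulVmx.
exists (invmx G *m B^T); split.
- by rewrite -mulmxA PB mulmx1.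
- by rewrite PB mul1mx.
- by rewrite !trmx_mul trmxK trmx_inv G_sym mulmxA.
- by rewrite PB trmx1.
Qed.

Lemma penrose_normal {p q} {B : 'M[R]_(p, q)} {P} :
  penrose B P -> forall y : 'cV[R]_p, B^T *m (B *m (P *m y) - y) = 0.
Proof.
case=> BPB _ BP_sym _ y.
have BtBP : B^T *m (B *m P) = B^T by rewrite -BP_sym -trmx_mul BPB.
by rewrite mulmxBr (mulmxA B) (mulmxA B^T) BtBP subrr.
Qed.

(* [sea_x A y S] unfolds to [embed S (pinv (colS A S) *m y)]. *)
Definition embed {p} (S : {set 'I_p}) (v : 'cV[R]_#|S|) : 'cV[R]_p :=
  \col_i \sum_(j < #|S| | enum_val j == i) v j 0.

Lemma supp_embed {p} (S : {set 'I_p}) (v : 'cV[R]_#|S|) : supp (embed S v) \subset S.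
Proof.
apply/supp_subsetP => i iS; rewrite mxE big_pred0 // => j.
by apply: contraNF iS => /eqP <-; exact: enum_valP.
Qed.

Lemma embed_val {p} (S : {set 'I_p}) (v : 'cV[R]_#|S|) j :
  embed S v (enum_val j) 0 = v j 0.
Proof. by rewrite mxE (big_pred1 j) // => j'; apply/eqP/eqP => [/enum_val_inj|->]. Qed.

Lemma embed_restrict {p} (S : {set 'I_p}) (z : 'cV[R]_p) :
  supp z \subset S -> embed S (\col_j z (enum_val j) 0) = z.
Proof.
move=> /supp_subsetP zS; apply/matrixP => i c; rewrite (ord1 c).
have [iS|iS] := boolP (i \in S); last by rewrite zS // (supp_subsetP _ _ (supp_embed _ _)).
by rewrite -(enum_rankK_in iS iS) embed_val mxE.
Qed.

Lemma mul_embed {m n} (A : 'M[R]_(m, n)) (S : {set 'I_n}) (v : 'cV[R]_#|S|) :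
  A *m embed S v = colS A S *m v.
Proof.
apply/matrixP => r c; rewrite (ord1 c) !mxE.
under eq_bigr => i _ do rewrite mxE big_distrr /= big_mkcond /=.
rewrite exchange_big /=; apply: eq_bigr => j _.
rewrite (bigD1 (enum_val j)) //= eqxx big1 ?addr0; last first.
  by move=> i /negPf; rewrite eq_sym => ->.
by rewrite !mxE.
Qed.

Section LeastSquares.
Context {m n l : nat} {A : 'M[R]_(m, n)} {d : R} {S : {set 'I_n}}.
Hypotheses (rip : rip_ineq A l d) (d_lt1 : d < 1) (S_small : (#|S| <= l)%N).

Lemma colS_inj (v : 'cV[R]_#|S|) : colS A S *m v = 0 -> v = 0.
Proof.
have small : (#|supp (embed S v)| <= l)%N.
  exact: leq_trans (subset_leq_card (supp_embed _ _)) S_small.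
rewrite -mul_embed => /(rip_inj rip _ d_lt1 small) v0.
by apply/matrixP => j c; rewrite (ord1 c) -embed_val v0 !mxE.
Qed.

Lemma supp_sea_x (y : 'cV[R]_m) : supp (sea_x A y S) \subset S.
Proof. exact: supp_embed. Qed.

Lemma sea_x_normal (y : 'cV[R]_m) (z : 'cV[R]_n) :
  supp z \subset S -> dot (A *m z) (A *m sea_x A y S - y) = 0.
Proof.
move=> /embed_restrict <-; rewrite !mul_embed dot_trmx trmx_mul -mulmxA.
by rewrite (penrose_normal (pinv_penrose _ colS_inj)) mulmx0 mxE.
Qed.

End LeastSquares.

Definition sea_grad {m n} (A : 'M[R]_(m, n)) (y : 'cV[R]_m) (S : {set 'I_n}) : 'cV[R]_n :=
  A^T *m (A *m sea_x A y S - y).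

Lemma sea_gradE {m n} (A : 'M[R]_(m, n)) y S j :
  sea_grad A y S j 0 = dot (A *m delta_mx j 0) (A *m sea_x A y S - y).
Proof. by rewrite -colE mxE; apply: eq_bigr => i _; rewrite !mxE. Qed.

Section OracleResidual.
Context {m n k : nat} {A : 'M[R]_(m, n)} {xs : 'cV[R]_n} {S : {set 'I_n}}
  {dk d2k d2k1 : R}.
Hypotheses (S_k : (#|S| <= k)%N) (xs_k : (#|supp xs| <= k)%N).
Hypotheses (rip_k : rip_ineq A k dk) (rip_2k : rip_ineq A k.*2 d2k)
  (rip_2k1 : rip_ineq A k.*2.+1 d2k1).
Hypotheses (dk_lt1 : dk < 1) (d2k_ge0 : 0 <= d2k) (d2k1_ge0 : 0 <= d2k1).
Hypothesis unit_cols : forall i, norm2 (col i A) = 1.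

Let w := sea_x A (A *m xs) S - restr S xs.
Let u := restr (~: S) xs.

Let residualE : A *m sea_x A (A *m xs) S - A *m xs = A *m w - A *m u.
Proof. by rewrite -!mulmxBr /w /u -addrA -opprD restrC. Qed.

Let supp_w : supp w \subset S.
Proof.
rewrite /w; apply: fintype.subset_trans (suppD _ _) _.
by rewrite suppN finset.subUset supp_sea_x // supp_restr subsetIl.
Qed.

Let card_w : (#|supp w| <= k)%N.
Proof. exact: leq_trans (subset_leq_card supp_w) S_k. Qed.

Let card_restr T : (#|supp (restr T xs)| <= k)%N.
Proof. by rewrite supp_restr; exact: leq_trans (subset_leq_card (subsetIr _ _)) xs_k. Qed.

Let Aw_sq : norm2 (A *m w) ^+ 2 = dot (A *m w) (A *m u).
Proof.
have := sea_x_normal rip_k dk_lt1 S_k (A *m xs) w supp_w.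
by rewrite residualE dotBr norm2_sq => /eqP; rewrite subr_eq0 => /eqP.
Qed.

Lemma sea_x_error_le :
  (1 - dk) * norm2 (sea_x A (A *m xs) S - restr S xs) <= d2k * norm2 xs.
Proof.
have /andP[lo _] := rip_k w card_w.
have wu : [disjoint supp w & supp u].
  apply: disjointWl supp_w _; rewrite supp_restr.
  by apply: disjointWr (subsetIl _ _) _; rewrite finset.disjoints_subset finset.setCK.
have card_wu : (#|supp w| + #|supp u| <= k.*2)%N.
  by rewrite -addnn; exact: leq_add card_w (card_restr _).
have := rip_dot rip_2k _ _ wu card_wu; rewrite ler_norml => /andP[_ up].
have u_le : norm2 u <= norm2 xs := norm2_restr _ _.
have u_xs : d2k * norm2 w * norm2 u <= d2k * norm2 w * norm2 xs.
  by rewrite ler_wpM2l // mulr_ge0 ?norm2_ge0.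
rewrite Aw_sq in lo; have key := le_trans lo (le_trans up u_xs).
rewrite -/w; have [w0|w_ne0] := eqVneq (norm2 w) 0.
  by rewrite w0 mulr0 mulr_ge0 ?norm2_ge0.
have w_gt0 : 0 < norm2 w by rewrite lt_def w_ne0 norm2_ge0.
by rewrite -(ler_pM2l w_gt0); nra.
Qed.

Lemma sea_grad_in j : j \in S -> sea_grad A (A *m xs) S j 0 = 0.
Proof.
move=> jS; rewrite sea_gradE (sea_x_normal rip_k dk_lt1 S_k) //.
by rewrite supp_delta finset.sub1set.
Qed.

Lemma sea_grad_out j : j \notin S ->
  `|sea_grad A (A *m xs) S j 0 + xs j 0| <= alpha_rip dk d2k d2k1 * norm2 xs.
Proof.
move=> jS; set e := delta_mx j 0 : 'cV[R]_n.
have jSC : j \in ~: S by rewrite inE.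
set u' := restr (~: S :\ j) xs.
have near_e v : j \notin supp v -> (#|supp v| <= k)%N ->
    `|dot (A *m e) (A *m v)| <= d2k1 * norm2 v.
  move=> jv vk; have := rip_dot rip_2k1 e v; rewrite norm2_delta mulr1; apply.
    by rewrite supp_delta disjoints1.
  by rewrite supp_delta cards1 add1n ltnS -addnn; exact: leq_trans vk (leq_addr _ _).
have j_w : j \notin supp w by apply: contra jS; apply: (fintype.subsetP supp_w).
have j_u' : j \notin supp u' by rewrite supp_restr !inE eqxx.
have Ae_e : dot (A *m e) (A *m e) = 1 by rewrite -colE -norm2_sq unit_cols expr1n.
rewrite sea_gradE residualE /u (restrD1 _ _ _ jSC) -/u' (mulmxDr A _ u') -scalemxAr.
rewrite dotBr dotDr dotZr Ae_e mulr1 opprD addrA addrAC subrK.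
have w_le : norm2 w <= d2k / (1 - dk) * norm2 xs.
  by rewrite mulrAC ler_pdivlMr ?subr_gt0 // mulrC sea_x_error_le.
have u'_le : norm2 u' <= norm2 xs := norm2_restr _ _.
have := ler_wpM2l d2k1_ge0 w_le; have := ler_wpM2l d2k1_ge0 u'_le.
have := near_e _ j_w card_w; have := near_e _ j_u' (card_restr _).
have := ler_normB (dot (A *m e) (A *m w)) (dot (A *m e) (A *m u')).
rewrite /alpha_rip; lra.
Qed.

Lemma sea_x_exact : supp xs \subset S -> sea_x A (A *m xs) S = xs.
Proof.
move=> xs_S; have u0 : u = 0.
  by apply: restr_disjoint; rewrite disjoint_sym finset.disjoints_subset finset.setCK.
have Aw0 : A *m w = 0.
  by apply/eqP; rewrite -norm2_eq0 -sqrf_eq0 Aw_sq u0 mulmx0 dot0r.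
have w0 : w = 0 := rip_inj rip_k w dk_lt1 card_w Aw0.
by rewrite -[RHS](restrC S) -/u u0 addr0; apply/eqP; rewrite -subr_eq0 -/w w0.
Qed.

End OracleResidual.

Section Largest.
Context {p : nat} (v : 'cV[R]_p).

Definition beats (j i : 'I_p) : bool :=
  (`|v i 0| < `|v j 0|) || ((`|v j 0| == `|v i 0|) && (i < j)%N).

Let beaters i := [set j | beats j i].

Lemma in_largest k i : (i \in largest k v) = (#|beaters i| < k)%N.
Proof. by rewrite inE. Qed.

Lemma beats_irr i : ~~ beats i i.
Proof. by rewrite /beats ltxx ltnn andbF. Qed.

Lemma beats_le j i : beats j i -> `|v i 0| <= `|v j 0|.
Proof. by case/orP => [/ltW //|/andP[/eqP -> _]]. Qed.

Lemma beats_trans l j i : beats l j -> beats j i -> beats l i.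
Proof.
rewrite /beats => /orP[lj|/andP[/eqP lj lj']] /orP[ji|/andP[/eqP ji ji']].
- by rewrite (lt_trans ji lj).
- by rewrite -ji lj.
- by rewrite lj ji.
- by rewrite lj ji eqxx (ltn_trans ji' lj') orbT.
Qed.

Lemma beats_total i j : i != j -> beats i j || beats j i.
Proof.
move=> ij; rewrite /beats; case: (ltgtP `|v j 0| `|v i 0|) => //= _.
by rewrite orbC; case: (ltngtP i j) => // /val_inj eq_ij; rewrite eq_ij eqxx in ij.
Qed.

Lemma beaters_lt j i : beats j i -> (#|beaters j| < #|beaters i|)%N.
Proof.
move=> ji; apply/proper_card/properP; split.
  by apply/fintype.subsetP => l; rewrite !inE => /beats_trans; apply.
by exists j; rewrite !inE // beats_irr.
Qed.

Lemma largest_card k : (#|largest k v| <= k)%N.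
Proof.
(* Distinct selected indices have distinct numbers of beaters, all below k. *)
have uniq_ranks : uniq [seq #|beaters i| | i <- enum (largest k v)].
  rewrite map_inj_in_uniq ?enum_uniq // => i j _ _ eq_ij.
  apply/eqP; apply: contraT => /beats_total.
  by case/orP => /beaters_lt; rewrite eq_ij ltnn.
rewrite cardE -(size_map (fun i => #|beaters i|)) -[leqRHS](size_iota 0 k).
apply: (uniq_leq_size uniq_ranks) => r /mapP[i].
by rewrite mem_enum in_largest mem_iota => ? ->.
Qed.

Lemma largest_dominated k (T : {set 'I_p}) i :
  (#|T| <= k)%N -> i \in T -> i \notin largest k v ->
  exists2 j, j \notin T & `|v i 0| <= `|v j 0|.
Proof.
move=> Tk iT; rewrite in_largest -leqNgt => k_beaters.
have : ~~ (beaters i \subset T :\ i).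
  apply: contraL k_beaters => /subset_leq_card le_T; rewrite -ltnNge.
  by apply: leq_ltn_trans le_T _; rewrite (cardsD1 i T) iT in Tk.
case/fintype.subsetPn => j; rewrite !inE => ji; rewrite negb_and negbK.
case/orP => [/eqP eq_ji|jT]; first by rewrite eq_ji (negbTE (beats_irr i)) in ji.
by exists j => //; apply: beats_le.
Qed.

End Largest.

Lemma sgr_mul_le (x y : R) : Num.sg x * y <= `|y|.
Proof.
apply: le_trans (ler_norm _) _; rewrite normrM normr_sg.
by case: (x != 0); rewrite ?mul1r ?mul0r.
Qed.

Section SupportExploration.
Context {n k : nat} (xs : 'cV[R]_n) (eta a : R) (X g : nat -> 'cV[R]_n).
Hypotheses (eta_gt0 : 0 < eta) (a_ge0 : 0 <= a) (a_le : a <= min_supp xs).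
Hypothesis xs_k : (#|supp xs| <= k)%N.
Hypotheses (X0 : X 0%N = 0) (XS : forall t, X t.+1 = X t - eta *: g t).
Hypothesis g_in : forall t j, j \in largest k (X t) -> g t j 0 = 0.
Hypothesis g_out : forall t j, j \notin largest k (X t) -> `|g t j 0 + xs j 0| <= a.

Definition miss_count i t := (\sum_(s < t) (i \notin largest k (X s)))%N.

Let miss_countS i t :
  miss_count i t.+1 = (miss_count i t + (i \notin largest k (X t)))%N.
Proof. exact: big_ord_recr. Qed.

Let XSE t j : X t.+1 j 0 = X t j 0 - eta * g t j 0.
Proof. by rewrite XS !mxE. Qed.

Lemma off_support_bound t j : j \notin supp xs -> `|X t j 0| <= eta * a * t%:R.
Proof.
rewrite inE negbK => /eqP xs_j; elim: t => [|t IH]; first by rewrite X0 mxE normr0 mulr0.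
rewrite XSE -natr1 mulrDr mulr1.
have [jS|jS] := boolP (j \in largest k (X t)).
  by rewrite g_in // mulr0 subr0 ler_wpDr // mulr_ge0 // ltW.
have := g_out t j jS; rewrite xs_j addr0 => g_le.
apply: le_trans (ler_normB _ _) _; rewrite normrM gtr0_norm //.
exact: lerD IH (ler_wpM2l (ltW eta_gt0) g_le).
Qed.

Lemma on_support_growth t i : i \in supp xs ->
  eta * (min_supp xs - a) * (miss_count i t)%:R <= Num.sg (xs i 0) * X t i 0.
Proof.
rewrite inE => xs_i; elim: t => [|t IH].
  by rewrite X0 mxE /miss_count big_ord0 !mulr0.
rewrite XSE miss_countS natrD.
have [iS|iS] := boolP (i \in largest k (X t)); first by rewrite addr0 g_in // mulr0 subr0.
have sg_le := le_trans (sgr_mul_le (xs i 0) _) (g_out t i iS).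
have min_le := min_supp_le _ _ xs_i.
have : min_supp xs - a <= - (Num.sg (xs i 0) * g t i 0).
  by move: sg_le; rewrite normrEsg in min_le; rewrite mulrDr; lra.
move/(ler_wpM2l (ltW eta_gt0)); rewrite /= mulr1n; lra.
Qed.

Lemma miss_count_bound t i : i \in supp xs ->
  (min_supp xs - a) * (miss_count i t)%:R <= a * t%:R + (min_supp xs - a).
Proof.
move=> xs_i; elim: t => [|t IH].
  by rewrite /miss_count big_ord0 !mulr0 add0r subr_ge0.
rewrite miss_countS natrD -natr1.
have [iS|iS] := boolP (i \in largest k (X t)).
  by rewrite addr0 (le_trans IH) // lerD2r mulrDr mulr1 lerDl.
have [j xs_j Xi_le] := largest_dominated (X t) _ _ _ xs_k xs_i iS.
have := le_trans (on_support_growth t _ xs_i) (le_trans (sgr_mul_le _ _) Xi_le).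
move/le_trans/(_ (off_support_bound t _ xs_j)); rewrite -!mulrA ler_pM2l //.
move=> cnt_le; rewrite /= mulr1n mulrDr mulr1 lerD2r (le_trans cnt_le) //.
by rewrite ler_wpM2l // lerDl.
Qed.

Lemma misses_sum_ge N :
  (forall t, (t < N)%N -> ~~ (supp xs \subset largest k (X t))) ->
  (N <= \sum_(i in supp xs) miss_count i N)%N.
Proof.
move=> uncovered; rewrite -[X in (X <= _)%N]card_ord -sum1_card exchange_big /=.
apply: leq_sum => s _; have /fintype.subsetPn[i xs_i iS] := uncovered s (ltn_ord s).
by rewrite (bigD1 i) //= iS leq_addr.
Qed.

Lemma support_eventually_covered N :
  k%:R * (a * N%:R + (min_supp xs - a)) < N%:R * (min_supp xs - a) ->
  exists2 t, (t < N)%N & supp xs \subset largest k (X t).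
Proof.
set c := min_supp xs - a => N_large.
have c_ge0 : 0 <= c by rewrite subr_ge0.
have [/existsP[t covered]|/existsPn uncovered] :=
  boolP [exists t : 'I_N, supp xs \subset largest k (X t)]; first by exists t.
have := misses_sum_ge N (fun t tN => uncovered (Ordinal tN)).
rewrite -(ler_nat R) natr_sum => /(ler_wpM2r c_ge0); rewrite mulr_suml => N_le.
have sum_le : \sum_(i in supp xs) (miss_count i N)%:R * c
    <= \sum_(i in supp xs) (a * N%:R + c).
  by apply: ler_sum => i xs_i; rewrite mulrC miss_count_bound.
rewrite sumr_const -[(_ + c) *+ _]mulr_natl in sum_le.
have k_le : #|supp xs|%:R * (a * N%:R + c) <= k%:R * (a * N%:R + c).
  by rewrite ler_wpM2r ?ler_nat // addr_ge0 // mulr_ge0.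
by have := le_trans N_le (le_trans sum_le k_le); rewrite leNgt N_large.
Qed.

End SupportExploration.

Lemma alpha_rip_ge0 (dk d2k d2k1 : R) :
  dk < 1 -> 0 <= d2k -> 0 <= d2k1 -> 0 <= alpha_rip dk d2k d2k1.
Proof.
move=> dk_lt1 d2k_ge0 d2k1_ge0; rewrite mulr_ge0 // addr_ge0 // divr_ge0 //.
by rewrite subr_ge0 ltW.
Qed.

Lemma iterations_suffice (K a mn beta N : R) :
  1 <= K -> 0 <= a -> 0 < mn -> beta < 1 -> 2 * K * a <= beta * mn ->
  (K + 1) / (1 - beta) < N -> K * (a * N + (mn - a)) < N * (mn - a).
Proof.
move=> K_ge1 a_ge0 mn_gt0 beta_lt1 Ka; rewrite ltr_pdivrMr ?subr_gt0 // => N_large.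
have N_gt0 : 0 < N by nra.
have aN : N * ((K + 1) * a) <= N * (beta * mn) by rewrite ler_pM2l //; nra.
have mnK : K * mn < N * (1 - beta) * mn by rewrite ltr_pM2r //; lra.
nra.
Qed.

Section SEANoiseless.
Context {m n k : nat} {A : 'M[R]_(m, n)} {xs : 'cV[R]_n} {dk d2k d2k1 eta : R}.
Hypotheses (xs_k : (#|supp xs| <= k)%N) (rip_k : rip_ineq A k dk)
  (rip_2k : rip_ineq A k.*2 d2k) (rip_2k1 : rip_ineq A k.*2.+1 d2k1).
Hypotheses (dk_lt1 : dk < 1) (d2k_ge0 : 0 <= d2k) (d2k1_ge0 : 0 <= d2k1)
  (d2k1_lt1 : d2k1 < 1).
Hypotheses (unit_cols : forall i, norm2 (col i A) = 1) (eta_gt0 : 0 < eta).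

Let S := sea_St A (A *m xs) k eta 0.

Lemma sea_covers_support N :
  let a := alpha_rip dk d2k d2k1 * norm2 xs in
  a <= min_supp xs ->
  k%:R * (a * N%:R + (min_supp xs - a)) < N%:R * (min_supp xs - a) ->
  exists2 t, (t < N)%N & supp xs \subset S t.
Proof.
move=> a a_le N_large.
have a_ge0 : 0 <= a by rewrite mulr_ge0 ?norm2_ge0 ?alpha_rip_ge0.
apply: (support_eventually_covered xs eta a (sea_X A (A *m xs) k eta 0)
  (fun t => sea_grad A (A *m xs) (S t))) N_large => // t j jS.
- exact: sea_grad_in (largest_card _ _) rip_k dk_lt1 _ jS.
- exact: sea_grad_out (largest_card _ _) xs_k rip_k rip_2k rip_2k1 dk_lt1
    d2k_ge0 d2k1_ge0 unit_cols _ jS.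
Qed.

Lemma sea_best_exact N tb :
  (exists2 t, (t < N)%N & supp xs \subset S t) ->
  (forall t, (t < N)%N ->
     norm2 (A *m sea_xt A (A *m xs) k eta 0 tb - A *m xs)
       <= norm2 (A *m sea_xt A (A *m xs) k eta 0 t - A *m xs)) ->
  supp xs \subset S tb /\ sea_xt A (A *m xs) k eta 0 tb = xs.
Proof.
case=> t tN covered best.
have exact_t : sea_xt A (A *m xs) k eta 0 t = xs.
  exact: sea_x_exact (largest_card _ _) rip_k dk_lt1 covered.
set x := sea_xt A (A *m xs) k eta 0 tb.
have supp_x : supp x \subset S tb := supp_sea_x _.
have Ax : A *m x = A *m xs.
  apply/eqP; rewrite -subr_eq0 -norm2_eq0 eq_le norm2_ge0 andbT.
  by have := best t tN; rewrite exact_t subrr norm2_0.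
have card_x : (#|supp x| + #|supp xs| <= k.*2.+1)%N.
  apply: leqW; rewrite -addnn leq_add //.
  exact: leq_trans (subset_leq_card supp_x) (largest_card _ _).
have x_eq := rip_sparse_unique rip_2k1 _ _ d2k1_lt1 card_x Ax.
by rewrite -x_eq.
Qed.

Lemma sea_recovers beta N tb :
  (0 < k)%N -> xs != 0 -> beta < 1 ->
  2 * k%:R * (alpha_rip dk d2k d2k1 * norm2 xs) <= beta * min_supp xs ->
  k.+1%:R / (1 - beta) < N%:R ->
  (forall t, (t < N)%N ->
     norm2 (A *m sea_xt A (A *m xs) k eta 0 tb - A *m xs)
       <= norm2 (A *m sea_xt A (A *m xs) k eta 0 t - A *m xs)) ->
  supp xs \subset S tb /\ sea_xt A (A *m xs) k eta 0 tb = xs.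
Proof.
move=> k_gt0 xs_ne0 beta_lt1 Ka N_large best; apply: sea_best_exact best.
set a := alpha_rip dk d2k d2k1 * norm2 xs.
have a_ge0 : 0 <= a by rewrite mulr_ge0 ?norm2_ge0 ?alpha_rip_ge0.
have mn_gt0 := min_supp_gt0 _ xs_ne0.
have a_le : a <= min_supp xs.
  have a_le2Ka : a <= 2 * k%:R * a by rewrite ler_peMl // -natrM ler1n muln_gt0.
  by apply: le_trans a_le2Ka (le_trans Ka _); rewrite ler_piMl // ?ltW.
apply: sea_covers_support a_le _.
by apply: (@iterations_suffice _ _ _ beta); rewrite ?ler1n // natr1.
Qed.

End SEANoiseless.

End SEA.

Theorem corollary4p2 (R : realType) (m n k : nat)
  (A : 'M[R]_(m, n)) (xs : 'cV[R]_n) (dk d2k d2k1 beta : R) :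
  (0 < m)%N -> (0 < n)%N -> (0 < k)%N ->
  (k.*2.+1 <= n)%N ->
  (1 <= #|supp xs| <= k)%N ->
  is_ric A k dk -> is_ric A k.*2 d2k -> is_ric A k.*2.+1 d2k1 ->
  d2k1 < 1 ->
  (forall i : 'I_n, norm2 (col i A) = 1) ->
  0 < beta < 1 ->
  (k.*2)%:R * alpha_rip dk d2k d2k1 * norm2 xs / min_supp xs <= beta ->
  let y := A *m xs in
  let e : 'cV[R]_m := 0 in
  gamma_rip dk d2k1 * norm2 e < min_supp xs / (k.*2)%:R - alpha_rip dk d2k d2k1 * norm2 xs
  /\
  (forall (eta : R) (N tb : nat), 0 < eta ->
     (k.+1)%:R / (1 - beta) < N%:R ->
     (tb < N)%N ->
     (forall t', (t' < N)%N ->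
        norm2 (A *m sea_xt A y k eta 0 tb - y) <= norm2 (A *m sea_xt A y k eta 0 t' - y)) ->
     supp xs \subset sea_St A y k eta 0 tb /\ sea_xt A y k eta 0 tb = xs).
Proof.
move=> _ _ k_gt0 _ /andP[xs_nz xs_k] ric_k ric_2k ric_2k1 d2k1_lt1 unit_cols
  /andP[_ beta_lt1] alpha_small y e.
have [_ rip_k _] := ric_k; have [d2k_ge0 rip_2k _] := ric_2k.
have [d2k1_ge0 rip_2k1 _] := ric_2k1.
have dk_lt1 : dk < 1.
  apply: le_lt_trans d2k1_lt1; apply: ric_le ric_k ric_2k1.
  by rewrite -addnn; apply/leqW/leq_addr.
have xs_ne0 : xs != 0.
  by have [i] := card_gt0P xs_nz; rewrite inE; apply: contraNneq => ->; rewrite mxE.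
have mn_gt0 := min_supp_gt0 _ _ xs_ne0.
have Ka : 2 * k%:R * (alpha_rip dk d2k d2k1 * norm2 xs) <= beta * min_supp xs.
  by move: alpha_small; rewrite -mul2n natrM ler_pdivrMr // -mulrA.
split=> [|eta N tb eta_gt0 N_large _ best].
  rewrite /e norm2_0 mulr0 subr_gt0 ltr_pdivlMr -mul2n natrM ?mulr_gt0 ?ltr0n //.
  by rewrite mulrC (le_lt_trans Ka) // gtr_pMl.
by apply: (sea_recovers _ xs_k rip_k rip_2k rip_2k1 dk_lt1 d2k_ge0 d2k1_ge0 d2k1_lt1
  unit_cols eta_gt0 beta) best.
Qed.
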